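(* Let $\Gamma$ be a finite multiset of formulas and $A$ a formula. If $\Gamma \vdash_c A$ and $(\mathcal{V}^-(\Gamma) \cup \mathcal{V}^+(A)) \cap (\mathcal{V}^+_{ns}(\Gamma) \cup \mathcal{V}^-(A)) = \emptyset$, then $\Gamma \vdash_i A$.
   Context: Formulas are built from propositional variables and $\bot$ using $\land$, $\lor$, $\to$; $\lnot A$ abbreviates $A \to \bot$. $\vdash_c$ and $\vdash_i$ denote derivability in classical and intuitionistic propositional logic respectively. The sets $\mathcal{V}^+(A)$, $\mathcal{V}^-(A)$ of variables occurring positively, negatively in $A$ are defined simultaneously by: $\mathcal{V}^+(p)=\{p\}$, $\mathcal{V}^+(\bot)=\emptyset$, $\mathcal{V}^+(A\land B)=\mathcal{V}^+(A\lor B)=\mathcal{V}^+(A)\cup\mathcal{V}^+(B)$, $\mathcal{V}^+(A\to B)=\mathcal{V}^-(A)\cup\mathcal{V}^+(B)$; $\mathcal{V}^-(p)=\mathcal{V}^-(\bot)=\emptyset$, $\mathcal{V}^-(A\land B)=\mathcal{V}^-(A\lor B)=\mathcal{V}^-(A)\cup\mathcal{V}^-(B)$, $\mathcal{V}^-(A\to B)=\mathcal{V}^+(A)\cup\mathcal{V}^-(B)$. The set $\mathcal{V}^+_{ns}(A)$ of variables occurring non-strictly positively is defined by $\mathcal{V}^+_{ns}(p)=\mathcal{V}^+_{ns}(\bot)=\emptyset$, $\mathcal{V}^+_{ns}(A\land B)=\mathcal{V}^+_{ns}(A\lor B)=\mathcal{V}^+_{ns}(A)\cup\mathcal{V}^+_{ns}(B)$,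 $\mathcal{V}^+_{ns}(A\to B)=\mathcal{V}^-(A)\cup\mathcal{V}^+_{ns}(B)$. For a finite multiset $\Gamma$, $\mathcal{V}^+(\Gamma)=\bigcup_{A\in\Gamma}\mathcal{V}^+(A)$, and similarly for $\mathcal{V}^-$ and $\mathcal{V}^+_{ns}$. *)

From Stdlib Require Import List.
Import ListNotations.

Inductive form : Type :=
| Var : nat -> form
| Bot : form
| And : form -> form -> form
| Or  : form -> form -> form
| Imp : form -> form -> form.

Definition Neg (A : form) : form := Imp A Bot.

Fixpoint Vpos (A : form) : list nat :=
  match A with
  | Var p => [p]
  | Bot => []
  | And B C => Vpos B ++ Vpos C
  | Or B C => Vpos B ++ Vpos C
  | Imp B C => Vneg B ++ Vpos C
  end
with Vneg (A : form) : list nat :=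
  match A with
  | Var _ => []
  | Bot => []
  | And B C => Vneg B ++ Vneg C
  | Or B C => Vneg B ++ Vneg C
  | Imp B C => Vpos B ++ Vneg C
  end.

Fixpoint Vns (A : form) : list nat :=
  match A with
  | Var _ => []
  | Bot => []
  | And B C => Vns B ++ Vns C
  | Or B C => Vns B ++ Vns C
  | Imp B C => Vneg B ++ Vns C
  end.

(* Finite multisets of formulas are represented by lists. *)
Definition VposL (G : list form) : list nat := flat_map Vpos G.
Definition VnegL (G : list form) : list nat := flat_map Vneg G.
Definition VnsL  (G : list form) : list nat := flat_map Vns G.

(* Natural deduction; the boolean flag [cl] selects classical logic
   (rule RAA) instead of intuitionistic ex falso. *)
Inductive ND (cl : bool) : list form -> form -> Prop :=
| nd_ax : forall G A, In A G -> ND cl G A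
| nd_andI : forall G A B, ND cl G A -> ND cl G B -> ND cl G (And A B)
| nd_andE1 : forall G A B, ND cl G (And A B) -> ND cl G A
| nd_andE2 : forall G A B, ND cl G (And A B) -> ND cl G B
| nd_orI1 : forall G A B, ND cl G A -> ND cl G (Or A B)
| nd_orI2 : forall G A B, ND cl G B -> ND cl G (Or A B)
| nd_orE : forall G A B C, ND cl G (Or A B) -> ND cl (A :: G) C ->
    ND cl (B :: G) C -> ND cl G C
| nd_impI : forall G A B, ND cl (A :: G) B -> ND cl G (Imp A B)
| nd_impE : forall G A B, ND cl G (Imp A B) -> ND cl G A -> ND cl G B
| nd_efq : forall G A, ND cl G Bot -> ND cl G A
| nd_raa : forall G A, cl = true -> ND cl (Neg A :: G) Bot -> ND cl G A.

Definition prov_c (G : list form) (A : form) : Prop := ND true G A.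
Definition prov_i (G : list form) (A : form) : Prop := ND false G A.

From Stdlib Require Import List Lia Classical Cantor.
Import ListNotations.

(* Suppose [G] does not prove [A] intuitionistically, and extend [G] to a prime
   theory [W] not containing [A].  Let [S] be the set of variables occurring
   non-strictly positively in [G] or negatively in [A], and evaluate a variable
   [p] as true iff [p ∈ S] or [Var p ∈ W].  By induction on formulas, a formula
   all of whose negative variables lie in [S] and positive variables lie outside
   [S] is in [W] as soon as it is true, while a formula with the opposite
   polarity pattern is true as soon as it belongs to some prime extension of [W].
   The disjointness hypothesis puts [A] in the first class and makes all
   hypotheses of [G] true; classical soundness then makes [A] true, so [A ∈ W]:
   a contradiction. *)

Lemma ND_weaken cl G A : ND cl G A -> forall G', incl G G' -> ND cl G' A.
Proof.
  induction 1; intros G' HG.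
  - apply nd_ax; auto.
  - apply nd_andI; auto.
  - eapply nd_andE1; eauto.
  - eapply nd_andE2; eauto.
  - apply nd_orI1; auto.
  - apply nd_orI2; auto.
  - eapply nd_orE; [eauto | apply IHND2 | apply IHND3];
      intros x [<- | Hx]; simpl; auto.
  - apply nd_impI, IHND; intros x [<- | Hx]; simpl; auto.
  - eapply nd_impE; eauto.
  - apply nd_efq; auto.
  - apply nd_raa, IHND; auto; intros x [<- | Hx]; simpl; auto.
Qed.

Fixpoint eval (v : nat -> Prop) (F : form) : Prop :=
  match F with
  | Var p => v p
  | Bot => False
  | And B C => eval v B /\ eval v C
  | Or B C => eval v B \/ eval v C
  | Imp B C => eval v B -> eval v C
  end.

Lemma ND_sound cl G A :
  ND cl G A -> forall v, (forall H, In H G -> eval v H) -> eval v A.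
Proof.
  induction 1; intros v Hv; simpl in *.
  - auto.
  - split; auto.
  - apply (IHND v Hv).
  - apply (IHND v Hv).
  - left; auto.
  - right; auto.
  - destruct (IHND1 v Hv) as [HA | HB].
    + apply IHND2; intros x [<- | Hx]; auto.
    + apply IHND3; intros x [<- | Hx]; auto.
  - intros HA; apply IHND; intros x [<- | Hx]; auto.
  - apply (IHND1 v Hv (IHND2 v Hv)).
  - destruct (IHND v Hv).
  - apply NNPP; intros HnA; apply (IHND v); intros x [<- | Hx]; simpl; auto.
Qed.

Definition theory := form -> Prop.

Definition entails (T : theory) (F : form) : Prop :=
  exists L, (forall H, In H L -> T H) /\ ND false L F.

Definition add (T : theory) (F : form) : theory := fun H => T H \/ H = F.

Definition closed (T : theory) : Prop := forall F, entails T F -> T F.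

Record prime_theory (T : theory) : Prop := {
  prime_closed : closed T;
  prime_or : forall F G, T (Or F G) -> T F \/ T G;
  prime_consistent : ~ T Bot
}.

Lemma entails_mono (T T' : theory) F :
  (forall H, T H -> T' H) -> entails T F -> entails T' F.
Proof. intros HT [L [HL HD]]; exists L; auto. Qed.

Lemma entails_ax (T : theory) F : T F -> entails T F.
Proof. intros HF; exists [F]; split; [intros H [<- | []] | apply nd_ax]; simpl; auto. Qed.

Lemma entails_of_ND (T : theory) Hs C :
  (forall F, In F Hs -> entails T F) -> ND false Hs C -> entails T C.
Proof.
  revert C; induction Hs as [| F Hs IH]; intros C HHs HC.
  - exists []; split; [intros _ [] | exact HC].
  - destruct (IH (Imp F C)) as [L1 [HL1 HD1]]; [intros; apply HHs; simpl; auto | |].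
    + apply nd_impI, HC.
    + destruct (HHs F (or_introl eq_refl)) as [L2 [HL2 HD2]].
      exists (L1 ++ L2); split.
      * intros H HH; apply in_app_iff in HH as [HH | HH]; auto.
      * apply nd_impE with F; eapply ND_weaken; eauto; intros H HH;
          apply in_app_iff; auto.
Qed.

Lemma closed_ND (T : theory) Hs C :
  closed T -> (forall F, In F Hs -> T F) -> ND false Hs C -> T C.
Proof.
  intros HT HHs HC; apply HT, (entails_of_ND T Hs); auto.
  intros F HF; apply entails_ax; auto.
Qed.

Section ClosedTheory.

Variables (T : theory) (B C : form).
Hypothesis T_closed : closed T.

Lemma closed_And : T (And B C) <-> T B /\ T C.
Proof.
  split; [intros HBC; split | intros [HB HC]].
  - apply (closed_ND T [And B C]); [| intros E [<- | []] |]; auto.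
    apply nd_andE1 with C, nd_ax; simpl; auto.
  - apply (closed_ND T [And B C]); [| intros E [<- | []] |]; auto.
    apply nd_andE2 with B, nd_ax; simpl; auto.
  - apply (closed_ND T [B; C]); [| intros E [<- | [<- | []]] |]; auto.
    apply nd_andI; apply nd_ax; simpl; auto.
Qed.

Lemma closed_Or_intro : T B \/ T C -> T (Or B C).
Proof.
  intros [HB | HC].
  - apply (closed_ND T [B]); [| intros E [<- | []] |]; auto.
    apply nd_orI1, nd_ax; simpl; auto.
  - apply (closed_ND T [C]); [| intros E [<- | []] |]; auto.
    apply nd_orI2, nd_ax; simpl; auto.
Qed.

Lemma closed_Imp_elim : T (Imp B C) -> T B -> T C.
Proof.
  intros HBC HB; apply (closed_ND T [Imp B C; B]); [| intros E [<- | [<- | []]] |]; auto.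
  apply nd_impE with B; apply nd_ax; simpl; auto.
Qed.

End ClosedTheory.

Lemma entails_add_imp (T : theory) F C : entails (add T F) C -> entails T (Imp F C).
Proof.
  intros [L [HL HD]]; revert C HD; induction L as [| H L IH]; intros C HD.
  - exists []; split; [intros _ [] | apply nd_impI; eapply ND_weaken; eauto; intros _ []].
  - assert (HFHC : entails T (Imp F (Imp H C))).
    { apply IH; [intros; apply HL; simpl; auto | apply nd_impI, HD]. }
    destruct (HL H (or_introl eq_refl)) as [TH | ->].
    + apply (entails_of_ND T [Imp F (Imp H C); H]).
      * intros E [<- | [<- | []]]; auto using entails_ax.
      * apply nd_impI; apply nd_impE with H; [apply nd_impE with F |]; apply nd_ax; simpl; auto.
    + apply (entails_of_ND T [Imp F (Imp F C)]).
      * intros E [<- | []]; auto.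
      * apply nd_impI; apply nd_impE with F; [apply nd_impE with F |]; apply nd_ax; simpl; auto.
Qed.

Fixpoint code (F : form) : nat :=
  match F with
  | Var p => to_nat (0, p)
  | Bot => to_nat (1, 0)
  | And B C => to_nat (2, to_nat (code B, code C))
  | Or B C => to_nat (3, to_nat (code B, code C))
  | Imp B C => to_nat (4, to_nat (code B, code C))
  end.

Lemma to_nat_inj p q : to_nat p = to_nat q -> p = q.
Proof. intros H; rewrite <- (cancel_of_to p), <- (cancel_of_to q), H; reflexivity. Qed.

Lemma code_inj F F' : code F = code F' -> F = F'.
Proof.
  revert F'; induction F as [p | | B IB C IC | B IB C IC | B IB C IC];
    intros [p' | | B' C' | B' C' | B' C'] Hc; cbn [code] in Hc;
    apply to_nat_inj, pair_equal_spec in Hc as [Hk Hc]; try discriminate;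
    try (apply to_nat_inj, pair_equal_spec in Hc as [HB HC]); f_equal; auto.
Qed.

Section Lindenbaum.

Variables (T : theory) (A : form).

Fixpoint stage (n : nat) : theory :=
  match n with
  | 0 => T
  | S n => fun F => stage n F \/ (code F = n /\ ~ entails (add (stage n) F) A)
  end.

Definition lindenbaum : theory := fun F => exists n, stage n F.

Lemma stage_mono n m F : n <= m -> stage n F -> stage m F.
Proof. induction 1; simpl; auto. Qed.

Hypothesis T_A : ~ entails T A.

Lemma stage_consistent n : ~ entails (stage n) A.
Proof.
  induction n as [| n IH]; [exact T_A |]; intros HA.
  destruct (classic (exists F, code F = n /\ ~ entails (add (stage n) F) A))
    as [[F [HF HnF]] | Hnone].
  - apply HnF; revert HA; apply entails_mono; intros E [HE | [HE _]]; [left; auto |].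
    right; apply code_inj; congruence.
  - apply IH; revert HA; apply entails_mono; intros E [HE | HE]; auto.
    exfalso; apply Hnone; exists E; exact HE.
Qed.

Lemma lindenbaum_consistent : ~ entails lindenbaum A.
Proof.
  intros [L [HL HD]].
  assert (HN : exists N, forall F, In F L -> stage N F).
  { clear HD; induction L as [| F L IH]; [exists 0; intros _ [] |].
    destruct IH as [N HN]; [intros; apply HL; simpl; auto |].
    destruct (HL F (or_introl eq_refl)) as [n Hn].
    exists (max N n); intros E [<- | HE];
      [apply stage_mono with n | apply stage_mono with N]; auto; lia. }
  destruct HN as [N HN]; apply (stage_consistent N); exists L; auto.
Qed.

Lemma lindenbaum_maximal F : ~ lindenbaum F -> entails (add lindenbaum F) A.
Proof.
  intros HF; apply NNPP; intros HnF; apply HF; exists (S (code F)); right; split; auto.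
  intros HA; apply HnF; revert HA; apply entails_mono.
  intros E [HE | HE]; [left; exists (code F) | right]; auto.
Qed.

Lemma lindenbaum_prime_theory : prime_theory lindenbaum.
Proof.
  assert (Himp : forall F, ~ lindenbaum F -> entails lindenbaum (Imp F A))
    by (intros; apply entails_add_imp, lindenbaum_maximal; auto).
  split.
  - intros F HF; apply NNPP; intros HnF; apply lindenbaum_consistent.
    apply (entails_of_ND _ [Imp F A; F]).
    + intros E [<- | [<- | []]]; auto.
    + apply nd_impE with F; apply nd_ax; simpl; auto.
  - intros F G HFG; apply NNPP; intros HnFG; apply lindenbaum_consistent.
    apply (entails_of_ND _ [Or F G; Imp F A; Imp G A]).
    + intros E [<- | [<- | [<- | []]]]; auto using entails_ax;
        apply Himp; intros HE; apply HnFG; auto.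
    + apply nd_orE with F G; [apply nd_ax; simpl; auto | |];
        [apply nd_impE with F | apply nd_impE with G]; apply nd_ax; simpl; auto.
  - intros Hbot; apply lindenbaum_consistent.
    apply (entails_of_ND _ [Bot]); [intros E [<- | []]; apply entails_ax; auto |].
    apply nd_efq, nd_ax; simpl; auto.
Qed.

End Lindenbaum.

Lemma lindenbaum_extension (T : theory) A : ~ entails T A ->
  exists W, (forall F, T F -> W F) /\ prime_theory W /\ ~ entails W A.
Proof.
  intros HA; exists (lindenbaum T A); split; [intros F HF; exists 0; auto | split].
  - apply lindenbaum_prime_theory, HA.
  - apply lindenbaum_consistent, HA.
Qed.

Lemma prime_extension_of_not_Imp (W : theory) B C : closed W -> ~ W (Imp B C) ->
  exists U, (forall F, W F -> U F) /\ prime_theory U /\ U B /\ ~ U C.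
Proof.
  intros Wc HBC.
  assert (HnC : ~ entails (add W B) C)
    by (intros HC; apply HBC, Wc, entails_add_imp; auto).
  destruct (lindenbaum_extension _ _ HnC) as [U [HWU [HU HUC]]].
  exists U; split; [| split; [exact HU | split]].
  - intros F HF; apply HWU; left; auto.
  - apply HWU; right; auto.
  - intros HC; apply HUC, entails_ax; auto.
Qed.

Definition separates (S : nat -> Prop) (inside outside : list nat) : Prop :=
  (forall q, In q inside -> S q) /\ (forall q, In q outside -> ~ S q).

Lemma separates_app S l1 l2 m1 m2 :
  separates S (l1 ++ l2) (m1 ++ m2) <-> separates S l1 m1 /\ separates S l2 m2.
Proof. unfold separates; setoid_rewrite in_app_iff; firstorder. Qed.

Section MixedValuation.

Variables (S : nat -> Prop) (W : theory).
Hypothesis W_prime : prime_theory W.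

Definition mixed_val (p : nat) : Prop := S p \/ W (Var p).

Lemma mixed_val_pos_neg F :
  (separates S (Vneg F) (Vpos F) -> eval mixed_val F -> W F) /\
  (separates S (Vpos F) (Vneg F) -> forall U, (forall H, W H -> U H) ->
     prime_theory U -> U F -> eval mixed_val F).
Proof.
  pose proof (prime_closed W W_prime) as Wc.
  induction F as [p | | B [IBp IBn] C [ICp ICn] | B [IBp IBn] C [ICp ICn]
                 | B [IBp IBn] C [ICp ICn]];
    simpl; rewrite ?separates_app; split.
  - intros [_ Hp] [HS | HW]; [destruct (Hp p) |]; simpl; auto.
  - intros [Hp _] U _ _ _; left; apply Hp; simpl; auto.
  - intros _ [].
  - intros _ U _ HU HUbot; exact (prime_consistent U HU HUbot).
  - intros [HB HC] [EB EC]; apply closed_And; auto.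
  - intros [HB HC] U HWU HU HBC.
    apply (closed_And U B C (prime_closed U HU)) in HBC as [UB UC].
    split; [apply (IBn HB U) | apply (ICn HC U)]; auto.
  - intros [HB HC] [EB | EC]; apply closed_Or_intro; auto.
  - intros [HB HC] U HWU HU HBC.
    destruct (prime_or U HU B C HBC); [left; apply (IBn HB U) | right; apply (ICn HC U)]; auto.
  - intros [HB HC] EBC; apply NNPP; intros HnBC.
    destruct (prime_extension_of_not_Imp W B C Wc HnBC) as [U [HWU [HU [UB UnC]]]].
    apply UnC, HWU, ICp, EBC, (IBn HB U); auto.
  - intros [HB HC] U HWU HU HBC EB; apply (ICn HC U); auto.
    apply closed_Imp_elim with B; auto using prime_closed.
Qed.

Lemma mixed_val_hyp H :
  separates S (Vns H) (Vneg H) -> W H -> eval mixed_val H.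
Proof.
  destruct W_prime as [Wc Wor Wbot].
  induction H as [p | | B IB C IC | B IB C IC | B IB C IC];
    simpl; rewrite ?separates_app; intros Hsep HW.
  - right; auto.
  - exact (Wbot HW).
  - destruct Hsep as [HB HC]; apply closed_And in HW as [WB WC]; auto.
  - destruct Hsep as [HB HC].
    destruct (Wor B C HW); [left; apply IB | right; apply IC]; auto.
  - destruct Hsep as [HB HC]; intros EB.
    assert (WB : W B) by (apply (proj1 (mixed_val_pos_neg B)); auto).
    apply IC; auto; apply closed_Imp_elim with B; auto.
Qed.

End MixedValuation.

Theorem mainTheorem2 (G : list form) (A : form) :
  prov_c G A ->
  (forall p : nat,
      (In p (VnegL G) \/ In p (Vpos A)) ->
      (In p (VnsL G) \/ In p (Vneg A)) -> False) ->
  prov_i G A.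
Proof.
  intros HGA Hdisj; apply NNPP; intros HnGA.
  assert (HG : ~ entails (fun H => In H G) A)
    by (intros [L [HL HD]]; apply HnGA; eapply ND_weaken; eauto).
  destruct (lindenbaum_extension _ _ HG) as [W [HGW [HW HWA]]].
  set (S := fun q => In q (VnsL G) \/ In q (Vneg A)).
  apply HWA, entails_ax, (proj1 (mixed_val_pos_neg S W HW A)).
  - split; [intros q Hq; right; auto | intros q Hq HS; apply (Hdisj q); auto].
  - apply (ND_sound _ _ _ HGA); intros H HH; apply mixed_val_hyp; auto.
    split; intros q Hq; [| intros HS; apply (Hdisj q); auto]; left;
      apply in_flat_map; eauto.
Qed.
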